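(* Let $n\ge 4$ and let $W_n^\sigma=(W_n,\sigma)$ be a signed wheel with central vertex $v_0$. Then $W_n^\sigma$ is distance compatible if and only if it contains no negative $4$-cycle (cycle of length $4$ whose product of edge signs is $-1$) having $v_0$ as one of its vertices.
   Context: The wheel $W_n$ is the join of the cycle $C_n$ with a single vertex $v_0$ (the central vertex); the vertices of $C_n$ are the rim vertices. A signed graph $\Sigma=(G,\sigma)$ consists of a finite simple connected graph $G=(V,E)$ and a signature $\sigma:E\to\{+1,-1\}$; the sign of a path or cycle is the product of its edge signs. For vertices $u,v$, $d(u,v)$ denotes the usual distance in $G$. Set $\sigma_{\max}(uv)=-1$ if every shortest $u$–$v$ path has sign $-1$, and $\sigma_{\max}(uv)=+1$ otherwise; set $\sigma_{\min}(uv)=+1$ if every shortest $u$–$v$ path has sign $+1$, and $\sigma_{\min}(uv)=-1$ otherwise. $\Sigma$ is (distance) compatible if $\sigma_{\max}(uv)d(u,v)=\sigma_{\min}(uv)d(u,v)$ for all vertices $u,v$. *)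

From mathcomp Require Import all_boot all_order all_algebra.
Set Implicit Arguments. Unset Strict Implicit. Unset Printing Implicit Defensive.
Import GRing.Theory Num.Theory.
Local Open Scope ring_scope.

(* A walk from u is a seq p of successive vertices (u itself excluded),    *)
(* of length size p.                                                        *)

Definition is_walk (T : finType) (adj : rel T) (u v : T) (p : seq T) : bool :=
  path adj u p && (last u p == v).

Definition has_walk (T : finType) (adj : rel T) (k : nat) (u v : T) : bool :=
  [exists p : k.-tuple T, is_walk adj u v p].

(* the usual distance d(u,v): least length of a u-v walk (for a connected
   graph, the least k < #|T| with a walk of length k) *)
Definition dist (T : finType) (adj : rel T) (u v : T) : nat :=
  find (fun k => has_walk adj k u v) (iota 0 #|T|).

Definition walk_sign (T : finType) (sigma : T -> T -> int) (u : T) (p : seq T)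
  : int := \prod_(e <- zip (u :: p) p) sigma e.1 e.2.

Definition sigma_max (T : finType) (adj : rel T) (sigma : T -> T -> int)
  (u v : T) : int :=
  if [forall p : (dist adj u v).-tuple T,
        is_walk adj u v p ==> (walk_sign sigma u p == -1)] then -1 else 1.

Definition sigma_min (T : finType) (adj : rel T) (sigma : T -> T -> int)
  (u v : T) : int :=
  if [forall p : (dist adj u v).-tuple T,
        is_walk adj u v p ==> (walk_sign sigma u p == 1)] then 1 else -1.

Definition compatible (T : finType) (adj : rel T) (sigma : T -> T -> int)
  : Prop :=
  forall u v : T, sigma_max adj sigma u v * (dist adj u v)%:Z
                  = sigma_min adj sigma u v * (dist adj u v)%:Z.

Definition signature (T : finType) (adj : rel T) (sigma : T -> T -> int)
  : Prop :=
  forall u v, adj u v -> sigma u v = sigma v u /\ (sigma u v = 1 \/ sigma u v = -1).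

(* The wheel W_n on vertices 'I_n.+1: vertex 0 is the centre v0, vertices
   1..n are the rim vertices, forming the cycle 1 - 2 - ... - n - 1. *)
Definition rim_next (n : nat) (i : nat) : nat := (i %% n).+1.

Definition wheel_adj (n : nat) : rel 'I_n.+1 := fun u v =>
  (u != v) &&
  [|| (val u == 0%N) && (val v != 0%N),
      (val v == 0%N) && (val u != 0%N)
    | [&& val u != 0%N, val v != 0%N &
          (val v == rim_next n u) || (val u == rim_next n v)]].

Definition wheel_center (n : nat) : 'I_n.+1 := ord0.
Arguments wheel_center n : clear implicits.

Definition neg_4cycle (T : finType) (adj : rel T) (sigma : T -> T -> int)
  (a b c d : T) : Prop :=
  [/\ uniq [:: a; b; c; d],
      [&& adj a b, adj b c, adj c d & adj d a] &
      sigma a b * sigma b c * sigma c d * sigma d a = -1].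
Arguments wheel_adj n : clear implicits.

From mathcomp Require Import all_boot all_order all_algebra.
From mathcomp Require Import zify ring.
Import GRing.Theory Num.Theory.
Local Open Scope ring_scope.
Set Implicit Arguments. Unset Strict Implicit. Unset Printing Implicit Defensive.

(* The wheel W_n has diameter 2, and in any signed graph of diameter at most
   2 compatibility is a statement about 2-paths only: pairs at distance 0 or
   1 have a unique shortest walk, and a pair u, v at distance 2 is compatible
   iff all the 2-paths u - w - v have the same sign (two shortest walks of
   different signs force sigma_max = 1 and sigma_min = -1).  Call a signed
   graph "two-path balanced" when this holds for every such pair.
   Two 2-paths u - w1 - v and u - w2 - v of different signs close up into a
   negative 4-cycle u w1 v w2, and conversely every negative 4-cycle a b c d
   yields two 2-paths a - b - c and a - d - c of different signs.  In W_n
   (n >= 4) the opposite corners b, d of a 4-cycle through the centre are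
   non-adjacent rim vertices, and two rim vertices u, v at distance 2 always
   have the centre as a common neighbour; so W_n is two-path balanced iff it
   has no negative 4-cycle through the centre. *)

Section SignedGraph.
Variables (T : finType) (adj : rel T) (sigma : T -> T -> int).

Lemma has_walkP k u v :
  reflect (exists p, size p = k /\ is_walk adj u v p) (has_walk adj k u v).
Proof.
apply: (iffP existsP) => [[t Ht]|[p [Hs Hp]]].
  by exists (tval t); rewrite size_tuple.
have Hs' : size p == k by apply/eqP.
by exists (Tuple Hs').
Qed.

Lemma dist_spec k u v : (k < #|T|)%N -> has_walk adj k u v ->
  [/\ (dist adj u v <= k)%N, has_walk adj (dist adj u v) u v &
      forall j, (j < dist adj u v)%N -> ~~ has_walk adj j u v].
Proof.
move=> hk hw.
have hs : has (fun k => has_walk adj k u v) (iota 0 #|T|).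
  by apply/hasP; exists k; rewrite ?mem_iota.
have hD := hs; rewrite has_find size_iota in hD.
have nthD j : (j < #|T|)%N -> nth 0%N (iota 0 #|T|) j = j.
  by move=> hj; rewrite nth_iota.
rewrite /dist; split.
- rewrite leqNgt; apply/negP => hlt.
  by have := before_find 0%N hlt; rewrite nthD // hw.
- by have := nth_find 0%N hs; rewrite nthD.
- move=> j hj; have hj' : (j < #|T|)%N by exact: ltn_trans hj hD.
  by have := before_find 0%N hj; rewrite nthD // => ->.
Qed.

Lemma walk0 u v p : size p = 0%N -> is_walk adj u v p = (u == v).
Proof. by case: p. Qed.

Lemma walk1 u v p : size p = 1%N -> is_walk adj u v p -> p = [:: v] /\ adj u v.
Proof.
case: p => [|a [|]] //= _; rewrite /is_walk /= andbT => /andP[h /eqP e].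
by subst.
Qed.

Lemma walk2 u v p : size p = 2%N -> is_walk adj u v p ->
  exists w, [/\ p = [:: w; v], adj u w & adj w v].
Proof.
case: p => [|a [|b []]] //= _.
rewrite /is_walk /= andbT => /andP[/andP[h1 h2] /eqP e].
by subst; exists a.
Qed.

Lemma walk_sign_cons u x p :
  walk_sign sigma u (x :: p) = sigma u x * walk_sign sigma x p.
Proof. by rewrite /walk_sign /= big_cons. Qed.

Lemma walk_sign1 u v : walk_sign sigma u [:: v] = sigma u v.
Proof. by rewrite walk_sign_cons /walk_sign big_nil mulr1. Qed.

Lemma walk_sign2 u w v : walk_sign sigma u [:: w; v] = sigma u w * sigma w v.
Proof. by rewrite walk_sign_cons walk_sign1. Qed.

Lemma mul_pm1 (x y : int) :
  (x = 1 \/ x = -1) -> (y = 1 \/ y = -1) -> x * y = 1 \/ x * y = -1.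
Proof. by move=> [->|->] [->|->]; auto. Qed.

Lemma walk_sign_pm1 u p : signature adj sigma -> path adj u p ->
  walk_sign sigma u p = 1 \/ walk_sign sigma u p = -1.
Proof.
move=> hsig; elim: p u => [|x p IHp] u /=; first by rewrite /walk_sign big_nil; left.
case/andP=> hux hp; rewrite walk_sign_cons.
by apply: mul_pm1; [case: (hsig _ _ hux) | exact: IHp].
Qed.

Lemma sigma_max_witness u v p : size p = dist adj u v -> is_walk adj u v p ->
  walk_sign sigma u p != -1 -> sigma_max adj sigma u v = 1.
Proof.
move=> hs hw hn; rewrite /sigma_max; case: ifP => // /forallP H.
have hs' : size p == dist adj u v by apply/eqP.
by have := H (Tuple hs'); rewrite /= hw /= (negbTE hn).
Qed.

Lemma sigma_min_witness u v p : size p = dist adj u v -> is_walk adj u v p ->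
  walk_sign sigma u p != 1 -> sigma_min adj sigma u v = -1.
Proof.
move=> hs hw hn; rewrite /sigma_min; case: ifP => // /forallP H.
have hs' : size p == dist adj u v by apply/eqP.
by have := H (Tuple hs'); rewrite /= hw /= (negbTE hn).
Qed.

Lemma sigma_max_all u v : (forall p, size p = dist adj u v ->
  is_walk adj u v p -> walk_sign sigma u p = -1) -> sigma_max adj sigma u v = -1.
Proof.
move=> H; rewrite /sigma_max; case: ifP => // /negbT/forallPn [t].
by rewrite negb_imply => /andP[hw]; rewrite (H _ (size_tuple t) hw) eqxx.
Qed.

Lemma sigma_min_all u v : (forall p, size p = dist adj u v ->
  is_walk adj u v p -> walk_sign sigma u p = 1) -> sigma_min adj sigma u v = 1.
Proof.
move=> H; rewrite /sigma_min; case: ifP => // /negbT/forallPn [t].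
by rewrite negb_imply => /andP[hw]; rewrite (H _ (size_tuple t) hw) eqxx.
Qed.

Lemma sigma_max_min_mixed u v p q :
  size p = dist adj u v -> is_walk adj u v p ->
  size q = dist adj u v -> is_walk adj u v q ->
  walk_sign sigma u p != walk_sign sigma u q ->
  sigma_max adj sigma u v = 1 /\ sigma_min adj sigma u v = -1.
Proof.
move=> hsp hwp hsq hwq hpq; split.
- case: (eqVneq (walk_sign sigma u p) (-1)) => e.
    by apply: (sigma_max_witness hsq hwq); rewrite -e eq_sym.
  exact: (sigma_max_witness hsp hwp).
- case: (eqVneq (walk_sign sigma u p) 1) => e.
    by apply: (sigma_min_witness hsq hwq); rewrite -e eq_sym.
  exact: (sigma_min_witness hsp hwp).
Qed.

Lemma sigma_max_min_uniform u v p0 :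
  size p0 = dist adj u v -> is_walk adj u v p0 ->
  (walk_sign sigma u p0 = 1 \/ walk_sign sigma u p0 = -1) ->
  (forall p, size p = dist adj u v -> is_walk adj u v p ->
     walk_sign sigma u p = walk_sign sigma u p0) ->
  sigma_max adj sigma u v = sigma_min adj sigma u v.
Proof.
move=> hs hw [e|e] H.
- rewrite (sigma_max_witness hs hw) ?e // sigma_min_all // => p hp hp'.
  by rewrite H.
- rewrite (sigma_min_witness hs hw) ?e // sigma_max_all // => p hp hp'.
  by rewrite H.
Qed.

Lemma dist_two u v w : (2 < #|T|)%N -> u != v -> ~~ adj u v ->
  adj u w -> adj w v -> dist adj u v = 2%N.
Proof.
move=> hT huv nuv huw hwv.
have hw : has_walk adj 2 u v.
  by apply/has_walkP; exists [:: w; v]; rewrite /is_walk /= huw hwv eqxx.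
have [hD hwD _] := dist_spec hT hw.
case: (dist adj u v) hD hwD => [|[|[|]]] // _ /has_walkP [p [hp hwp]].
- by rewrite walk0 // (negbTE huv) in hwp.
- by have [_ a] := walk1 hp hwp; rewrite a in nuv.
Qed.

(* Compatibility of a diameter-2 graph only depends on this condition. *)
Definition two_path_balanced : Prop :=
  forall u v w1 w2, u != v -> ~~ adj u v ->
    adj u w1 -> adj w1 v -> adj u w2 -> adj w2 v ->
    sigma u w1 * sigma w1 v = sigma u w2 * sigma w2 v.

(* In a compatible graph the 2-paths u - w - v between vertices at distance
   2 are shortest walks, so they cannot have different signs. *)
Lemma compatible_two_path_balanced : (2 < #|T|)%N ->
  compatible adj sigma -> two_path_balanced.
Proof.
move=> hT hcomp u v w1 w2 huv nuv a1 b1 a2 b2.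
apply/eqP; apply: contraT => hne.
have d2 := dist_two hT huv nuv a1 b1.
have walk_via w : adj u w -> adj w v ->
    size [:: w; v] = dist adj u v /\ is_walk adj u v [:: w; v].
  by move=> a b; rewrite d2 /is_walk /= a b eqxx.
have [s1 i1] := walk_via _ a1 b1; have [s2 i2] := walk_via _ a2 b2.
have hsigns : walk_sign sigma u [:: w1; v] != walk_sign sigma u [:: w2; v].
  by rewrite !walk_sign2.
have [hmax hmin] := sigma_max_min_mixed s1 i1 s2 i2 hsigns.
by have := hcomp u v; rewrite hmax hmin d2.
Qed.

(* In diameter at most 2, a pair at distance 0 or 1 has a single shortest
   walk, and at distance 2 balance makes all shortest walks agree. *)
Lemma two_path_balanced_compatible : (2 < #|T|)%N ->
  (forall u v, exists2 k, (k <= 2)%N & has_walk adj k u v) ->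
  signature adj sigma -> two_path_balanced -> compatible adj sigma.
Proof.
move=> hT hdiam hsig hbal u v.
have [k hk2 hk] := hdiam u v.
have [hD hwD hmin] := dist_spec (leq_ltn_trans hk2 hT) hk.
have hD2 := leq_trans hD hk2.
have /has_walkP [p0 [hs0 hw0]] := hwD.
congr (_ * _); apply: (sigma_max_min_uniform hs0 hw0).
  by apply: walk_sign_pm1 => //; case/andP: hw0.
move=> p hs hw.
case: (dist adj u v) hD2 hmin hs hs0 => [|[|[|//]]] _ hmin hs hs'.
- by case: p p0 hs hs' {hw hw0} => [|//] [|].
- by have [-> _] := walk1 hs hw; have [-> _] := walk1 hs' hw0.
- have huv : u != v.
    move: (hmin 0%N isT); apply: contraNneq => <-.
    by apply/has_walkP; exists [::]; rewrite /is_walk /= eqxx.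
  have nuv : ~~ adj u v.
    move: (hmin 1%N isT); apply: contra => a.
    by apply/has_walkP; exists [:: v]; rewrite /is_walk /= a eqxx.
  have [w [-> a b]] := walk2 hs hw; have [w0 [-> a0 b0]] := walk2 hs' hw0.
  by rewrite !walk_sign2; apply: hbal.
Qed.

Lemma neg_4cycle_rot a b c d :
  neg_4cycle adj sigma a b c d -> neg_4cycle adj sigma b c d a.
Proof.
case=> hu /and4P[h1 h2 h3 h4] hs; split.
- by move: hu; rewrite -(rot_uniq 1).
- by rewrite h2 h3 h4 h1.
- by rewrite -hs; ring.
Qed.

Lemma neg_4cycle_halves a b c d : signature adj sigma ->
  neg_4cycle adj sigma a b c d ->
  sigma a b * sigma b c != sigma a d * sigma d c.
Proof.
move=> hsig [_ /and4P[_ _ h3 h4] hs]; apply/eqP => e.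
have [hcd _] := hsig _ _ h3; have [hda _] := hsig _ _ h4.
have hsq : (sigma a d * sigma d c) ^+ 2 = -1 by rewrite -hs e hcd hda; ring.
by have := sqr_ge0 (sigma a d * sigma d c); rewrite hsq.
Qed.

Lemma neg_4cycle_of_halves u v w1 w2 :
  irreflexive adj -> symmetric adj -> signature adj sigma ->
  u != v -> w1 != w2 -> adj u w1 -> adj w1 v -> adj u w2 -> adj w2 v ->
  sigma u w1 * sigma w1 v != sigma u w2 * sigma w2 v ->
  neg_4cycle adj sigma u w1 v w2.
Proof.
move=> irr sym hsig huv hw a1 b1 a2 b2 hne.
have neq x y : adj x y -> x != y by apply: contraTneq => ->; rewrite irr.
split.
- rewrite /= !inE !negb_or huv neq // neq // hw neq //=.
  by rewrite eq_sym neq.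
- by rewrite a1 b1 sym b2 sym a2.
- have [<- _] := hsig _ _ b2; have [<- _] := hsig _ _ a2.
  have pm x y : adj x y -> sigma x y = 1 \/ sigma x y = -1.
    by move=> h; case: (hsig _ _ h).
  have -> : sigma u w1 * sigma w1 v * sigma w2 v * sigma u w2 =
            (sigma u w1 * sigma w1 v) * (sigma u w2 * sigma w2 v) by ring.
  move: hne.
  by case: (mul_pm1 (pm _ _ a1) (pm _ _ b1)) => ->;
     case: (mul_pm1 (pm _ _ a2) (pm _ _ b2)) => ->.
Qed.

End SignedGraph.

Lemma rim_triangle_free n b c d : (4 <= n)%N ->
  (0 < b <= n)%N -> (0 < c <= n)%N -> (0 < d <= n)%N ->
  (c == rim_next n b) || (b == rim_next n c) ->
  (d == rim_next n c) || (c == rim_next n d) ->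
  b != d -> ~~ ((d == rim_next n b) || (b == rim_next n d)).
Proof.
have rim_mod x : (0 < x <= n)%N ->
    (x < n /\ x %% n = x)%N \/ (x = n /\ x %% n = 0)%N.
  move=> /andP[h1 h2]; case: (ltnP x n) => h; first by left; rewrite modn_small.
  have e : x = n by apply/eqP; rewrite eqn_leq h2 h.
  by right; rewrite e modnn.
rewrite /rim_next => h4 hb hc hd.
case: (rim_mod _ hb) => [[? ->]|[? ->]]; case: (rim_mod _ hc) => [[? ->]|[? ->]];
case: (rim_mod _ hd) => [[? ->]|[? ->]];
move=> /orP[/eqP ?|/eqP ?] /orP[/eqP ?|/eqP ?] /eqP ?;
apply/negP => /orP[/eqP ?|/eqP ?]; lia.
Qed.

Section Wheel.
Variable n : nat.
Notation c0 := (wheel_center n).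
Notation adj := (wheel_adj n).

Lemma neq_center u : (u != c0) = (val u != 0%N).
Proof. by []. Qed.

Lemma wheel_adj_sym : symmetric adj.
Proof.
move=> u v; rewrite /wheel_adj eq_sym; congr andb.
by case: (val u == 0%N); case: (val v == 0%N) => //=; rewrite orbC.
Qed.

Lemma wheel_adj_irr : irreflexive adj.
Proof. by move=> u; rewrite /wheel_adj eqxx. Qed.

Lemma wheel_adj_center u : u != c0 -> adj c0 u.
Proof. by move=> h; rewrite /wheel_adj eq_sym h. Qed.

Lemma wheel_adj_to_center u : u != c0 -> adj u c0.
Proof. by move=> h; rewrite wheel_adj_sym wheel_adj_center. Qed.

(* W_n has diameter at most 2, every vertex being adjacent or equal to c0. *)
Lemma wheel_diam2 (u v : 'I_n.+1) :
  exists2 k, (k <= 2)%N & has_walk adj k u v.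
Proof.
case: (eqVneq u v) => [->|huv].
  by exists 0%N => //; apply/has_walkP; exists [::]; rewrite /is_walk /= eqxx.
case: (boolP (adj u v)) => ha.
  by exists 1%N => //; apply/has_walkP; exists [:: v]; rewrite /is_walk /= ha eqxx.
case: (eqVneq u c0) => hu; first by move: ha; rewrite hu wheel_adj_center // -hu eq_sym.
case: (eqVneq v c0) => hv; first by move: ha; rewrite hv wheel_adj_to_center.
exists 2%N => //; apply/has_walkP; exists [:: c0; v].
by rewrite /is_walk /= wheel_adj_to_center // wheel_adj_center // eqxx.
Qed.

Lemma wheel_rim_nonadj b c d : (4 <= n)%N -> b != c0 -> c != c0 -> d != c0 ->
  adj b c -> adj c d -> b != d -> ~~ adj b d.
Proof.
move=> h4 hb hc hd.
have rim_adj (x y : 'I_n.+1) : x != c0 -> y != c0 ->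
    adj x y = (x != y) && ((val y == rim_next n x) || (val x == rim_next n y)).
  by rewrite !neq_center /wheel_adj => /negbTE -> /negbTE ->.
have bounds (x : 'I_n.+1) : x != c0 -> (0 < x <= n)%N.
  by rewrite neq_center => hx; rewrite lt0n hx -ltnS ltn_ord.
rewrite !rim_adj // => /andP[_ h1] /andP[_ h2] hbd; rewrite hbd /=.
exact: (rim_triangle_free h4 (bounds _ hb) (bounds _ hc) (bounds _ hd) h1 h2).
Qed.

Definition neg_4cycle_through_center (sigma : 'I_n.+1 -> 'I_n.+1 -> int) :=
  exists a b c d : 'I_n.+1,
    neg_4cycle adj sigma a b c d /\ c0 \in [:: a; b; c; d].

Lemma neg_4cycle_from_center sigma : neg_4cycle_through_center sigma ->
  exists b x d, neg_4cycle adj sigma c0 b x d.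
Proof.
move=> [a [b [c [d [hc]]]]]; rewrite !inE => /or4P[] /eqP ->.
- by exists b, c, d.
- by exists c, d, a; apply: neg_4cycle_rot.
- by exists d, a, b; do 2 apply: neg_4cycle_rot.
- by exists a, b, c; do 3 apply: neg_4cycle_rot.
Qed.

(* For n >= 4, W_n is two-path balanced iff it has no negative 4-cycle
   through the centre: the corners b, d opposite c0 on such a cycle are at
   distance 2, and rim vertices at distance 2 have c0 as common neighbour. *)
Lemma wheel_two_path_balanced_iff sigma : (4 <= n)%N ->
  signature adj sigma ->
  two_path_balanced adj sigma <-> ~ neg_4cycle_through_center sigma.
Proof.
move=> h4 hsig; split.
  move=> hbal /neg_4cycle_from_center [b [x [d hc]]].
  have hc' := neg_4cycle_rot hc.
  case: hc => hu /and4P[h1 h2 h3 h4'] _.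
  move: hu; rewrite /= !inE !negb_or eq_sym (eq_sym _ x) (eq_sym _ d).
  case/andP=> /and3P[hb hx hd] /andP[/andP[_ hbd] _].
  have nbd := wheel_rim_nonadj h4 hb hx hd h2 h3 hbd.
  have := neg_4cycle_halves hsig hc'.
  by rewrite (hbal b d x c0) ?eqxx // wheel_adj_sym.
move=> hno u v w1 w2 huv nuv a1 b1 a2 b2.
have same w w' : adj u w -> adj w v -> adj u w' -> adj w' v ->
    c0 \in [:: u; w; v; w'] -> sigma u w * sigma w v = sigma u w' * sigma w' v.
  move=> a b a' b' hin; case: (eqVneq w w') => [-> //|hww'].
  apply/eqP; apply: contraT => hne; case: hno.
  exists u, w, v, w'; split=> //.
  exact: neg_4cycle_of_halves wheel_adj_irr wheel_adj_sym hsig huv hww' a b a' b' hne.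
case: (boolP (c0 \in [:: u; v])) => hc.
  by apply: same => //; move: hc; rewrite !inE => /orP[] ->; rewrite ?orbT.
move: hc; rewrite !inE negb_or !(eq_sym c0) => /andP[hu hv].
have ac := wheel_adj_to_center hu; have bc := wheel_adj_center hv.
by rewrite (same w1 c0) ?(same w2 c0) // !inE eqxx ?orbT.
Qed.

End Wheel.

Theorem theorem3p2 (n : nat) (sigma : 'I_n.+1 -> 'I_n.+1 -> int) :
  (4 <= n)%N ->
  signature (wheel_adj n) sigma ->
  compatible (wheel_adj n) sigma <->
  ~ (exists a b c d : 'I_n.+1,
        neg_4cycle (wheel_adj n) sigma a b c d /\
        wheel_center n \in [:: a; b; c; d]).
Proof.
move=> h4 hsig.
have hT : (2 < #|'I_n.+1|)%N by rewrite card_ord ltnS (leq_trans _ h4).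
rewrite -(wheel_two_path_balanced_iff h4 hsig); split.
- exact: compatible_two_path_balanced.
- exact: two_path_balanced_compatible hT (@wheel_diam2 n) hsig.
Qed.
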